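(* Let $\mathcal{H}$ be a Hilbert space of finite dimension $d\geq 2$ with orthonormal basis $\{\phi_k\}_{k=1}^d$, and let $\mathcal{I}$ be the instrument on $\Omega=\{0,1\}$ given by $\mathcal{I}_\omega(T)=L_\omega^*TL_\omega$ with $L_0=|\phi_d\rangle\langle\phi_d|$ and $L_1=\sum_{k=1}^{d-1}|\phi_{k+1}\rangle\langle\phi_k|$. Then $\mathsf{A}^\mathcal{I}_1\prec\mathsf{A}^\mathcal{I}_2\prec\cdots\prec\mathsf{A}^\mathcal{I}_{d-1}\simeq\mathsf{A}^\mathcal{I}_d\simeq\cdots$, and hence $\mathrm{sat}(\mathcal{I})=d-1$.
   Context: For finite-outcome observables (maps into positive operators summing to $\mathbb{1}$), $\mathsf{A}\preceq\mathsf{B}$ means there is $\kappa:\Omega_\mathsf{A}\times\Omega_\mathsf{B}\to[0,1]$ with $\sum_\omega\kappa(\omega|\omega')=1$ and $\mathsf{A}(\omega)=\sum_{\omega'}\kappa(\omega|\omega')\mathsf{B}(\omega')$; $\mathsf{A}\simeq\mathsf{B}$ means both directions hold; $\mathsf{A}\prec\mathsf{B}$ means $\mathsf{A}\preceq\mathsf{B}$ but not $\mathsf{B}\preceq\mathsf{A}$. $\mathsf{A}^\mathcal{I}_n(\omega_1,\ldots,\omega_n)=\mathcal{I}_{\omega_1}\circ\cdots\circ\mathcal{I}_{\omega_n}(\mathbb{1})$ on $\Omega^n$. The saturation step $\mathrm{sat}(\mathcal{I})$ is the smallest positive integer $n$ with $\mathsf{A}^\mathcal{I}_n\simeq\mathsf{A}^\mathcal{I}_{n+1}$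 ($\infty$ if none). *)

From HB Require Import structures.
From mathcomp Require Import all_boot all_order all_algebra.
Set Implicit Arguments. Unset Strict Implicit. Unset Printing Implicit Defensive.
Import Order.TTheory GRing.Theory Num.Theory.
Local Open Scope ring_scope.

Section Defs.
Variable C : numClosedFieldType.

Definition adj (m n : nat) (M : 'M[C]_(m, n)) : 'M[C]_(n, m) := (map_mx Num.conj M)^T.

Definition postproc (d : nat) (TA TB : finType)
    (A : TA -> 'M[C]_d) (B : TB -> 'M[C]_d) : Prop :=
  exists kappa : TA -> TB -> C,
    [/\ (forall a b, 0 <= kappa a b <= 1),
        (forall b, \sum_a kappa a b = 1) &
        (forall a, A a = \sum_b kappa a b *: B b)].

Definition obs_equiv d (TA TB : finType) (A : TA -> 'M[C]_d) (B : TB -> 'M[C]_d) :=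
  postproc A B /\ postproc B A.

Definition obs_strict d (TA TB : finType) (A : TA -> 'M[C]_d) (B : TB -> 'M[C]_d) :=
  postproc A B /\ ~ postproc B A.

Definition seq_obs d (Om : finType) (I : Om -> 'M[C]_d -> 'M[C]_d) (n : nat)
    (w : n.-tuple Om) : 'M[C]_d :=
  foldr (fun o T => I o T) 1%:M (val w).
Arguments seq_obs {d Om} I n w.


Definition is_sat d (Om : finType) (I : Om -> 'M[C]_d -> 'M[C]_d) (n : nat) : Prop :=
  [/\ 0 < n,
      obs_equiv (seq_obs I n) (seq_obs I n.+1) &
      forall m, 0 < m -> obs_equiv (seq_obs I m) (seq_obs I m.+1) -> n <= m]%N.

Definition kraus_instr d (Om : finType) (L : Om -> 'M[C]_d) (w : Om) (T : 'M[C]_d) :=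
  adj (L w) *m T *m L w.

(* standard basis vector e_k (0-based) and phi_k = U e_k *)
Definition std_vec d (k : nat) : 'cV[C]_d := \col_(i < d) ((i : nat) == k)%:R.
End Defs.
Arguments std_vec C d k : clear implicits.

Arguments seq_obs {C d Om} I n w.

From HB Require Import structures.
From mathcomp Require Import all_boot all_order all_algebra.
From mathcomp Require Import zify.
Import Order.TTheory GRing.Theory Num.Theory.
Local Open Scope ring_scope.
Set Implicit Arguments. Unset Strict Implicit.

(* Conjugating by U reduces everything to the standard basis, where L_1 is the
   truncated shift e_k |-> e_(k+1) and L_0 the projection onto e_(d-1).  Every
   A_n is then diagonal: A_n(w) projects onto the e_k whose outcome word
   1^t 0^(n-t), with t = min(n, d-1-k), equals w.  Diagonal observables are
   post-processings of each other exactly when the labellings of the basis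
   factor through each other, so A_n <= A_(n+1) always, while A_(n+1) <= A_n
   iff min(n, .) determines min(n+1, .) on {0, ..., d-1}, i.e. iff n >= d-1. *)

Section Adjoint.
Variable C : numClosedFieldType.

Lemma adjM p q r (A : 'M[C]_(p, q)) (B : 'M[C]_(q, r)) : adj (A *m B) = adj B *m adj A.
Proof. by rewrite /adj map_mxM trmx_mul. Qed.

Lemma adjK p q (A : 'M[C]_(p, q)) : adj (adj A) = A.
Proof. by apply/matrixP => i j; rewrite !mxE conjCK. Qed.

End Adjoint.

Section Postprocessing.
Variable C : numClosedFieldType.

Lemma eq_postproc n (TA TB : finType) (A A' : TA -> 'M[C]_n) (B B' : TB -> 'M[C]_n) :
  A =1 A' -> B =1 B' -> postproc A B -> postproc A' B'.
Proof.
move=> eqA eqB [k [k01 k_sum defA]]; exists k; split => // a.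
by rewrite -eqA defA; apply: eq_bigr => b _; rewrite eqB.
Qed.

Lemma postproc_mul n (TA TB : finType) (A : TA -> 'M[C]_n) (B : TB -> 'M[C]_n) (P Q : 'M[C]_n) :
  postproc A B -> postproc (fun a => P *m A a *m Q) (fun b => P *m B b *m Q).
Proof.
move=> [k [k01 k_sum defA]]; exists k; split => // a.
rewrite defA mulmx_sumr mulmx_suml; apply: eq_bigr => b _.
by rewrite -scalemxAr -scalemxAl.
Qed.

Lemma postproc_unitary_conjE n (TA TB : finType) (A : TA -> 'M[C]_n) (B : TB -> 'M[C]_n)
    (U : 'M[C]_n) :
  adj U *m U = 1%:M ->
  postproc (fun a => U *m A a *m adj U) (fun b => U *m B b *m adj U) <-> postproc A B.
Proof.
move=> unitU; split; last exact: postproc_mul.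
have UK M : adj U *m (U *m M *m adj U) *m U = M.
  by rewrite !mulmxA unitU mul1mx -mulmxA unitU mulmx1.
by move/(postproc_mul (adj U) U); apply: eq_postproc => a; rewrite UK.
Qed.

Lemma seq_obs_unitary_conj n (Om : finType) (U : 'M[C]_n) (K L : Om -> 'M[C]_n) :
  adj U *m U = 1%:M -> (forall o, L o = U *m K o *m adj U) ->
  forall k (w : k.-tuple Om),
  seq_obs (kraus_instr L) k w = U *m seq_obs (kraus_instr K) k w *m adj U.
Proof.
move=> unitU defL k w; rewrite /seq_obs; elim: (val w) => [|o s IHs] /=.
  by rewrite mulmx1 mulmx1C.
by rewrite IHs /kraus_instr defL !adjM adjK !mulmxA -!(mulmxA _ (adj U) U) unitU !mulmx1.
Qed.

End Postprocessing.

Lemma ord2_cases (o : 'I_2) : o = 0 \/ o = 1.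
Proof. by case: o => -[|[|]] // lt_o2; [left | right]; apply: val_inj. Qed.

Section LabelObservables.
Variable C : numClosedFieldType.

Lemma sum_nat_eq n c (q : pred nat) :
  \sum_(b < n) ((b == c :> nat) && q b)%:R = ((c < n)%N && q c)%:R :> C.
Proof.
rewrite (eq_bigr (fun b : 'I_n => if q b && (b == c :> nat) then 1 else 0)).
  by rewrite -big_mkcond (big_ord1_cond_eq +%R (fun=> 1)); case: ifP.
by move=> b _; rewrite andbC; case: ifP.
Qed.

Definition pred_mx n (p : pred nat) : 'M[C]_n := \matrix_(i, j) ((i == j) && p i)%:R.

Lemma eq_pred_mx n (p q : pred nat) :
  (forall k, (k < n)%N -> p k = q k) -> pred_mx n p = pred_mx n q.
Proof. by move=> eq_pq; apply/matrixP => i j; rewrite !mxE eq_pq. Qed.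

Definition label_obs n (T : finType) (f : nat -> T) (a : T) : 'M[C]_n :=
  pred_mx n (fun k => f k == a).

Lemma sum_scale_label_obsE n (T : finType) (f : nat -> T) (k : T -> C) (i j : 'I_n) :
  (\sum_b k b *: label_obs n f b) i j = (i == j)%:R * k (f i).
Proof.
rewrite summxE; under eq_bigr => b _ do rewrite !mxE.
have [_|_] /= := eqVneq i j; last by rewrite mul0r big1 // => b _; rewrite mulr0.
rewrite mul1r (bigD1 (f i)) //= eqxx mulr1 big1 ?addr0 // => b.
by rewrite eq_sym => /negbTE ->; rewrite mulr0.
Qed.

Lemma postproc_label_obsP n (TA TB : finType) (fA : nat -> TA) (fB : nat -> TB) :
  postproc (label_obs n.+1 fA) (label_obs n.+1 fB) <->
  (forall i j, (i <= n)%N -> (j <= n)%N -> fB i = fB j -> fA i = fA j).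
Proof.
split=> [[k [_ _ defA]] i j le_in le_jn eqB | factorB].
  have diagA x : (x <= n)%N -> forall a, (fA x == a)%:R = k a (fB x).
    move=> le_xn a; have {}le_xn : (x < n.+1)%N by [].
    have := congr1 (fun M : 'M[C]_n.+1 => M (Ordinal le_xn) (Ordinal le_xn)) (defA a).
    by rewrite /= sum_scale_label_obsE !mxE !eqxx mul1r.
  have := diagA i le_in (fA i); rewrite eqxx eqB -diagA //.
  by case: eqP => // _ /eqP; rewrite oner_eq0.
pose g b := if [pick i : 'I_n.+1 | fB i == b] is Some i then fA i else fA 0.
have gB i : (i <= n)%N -> g (fB i) = fA i.
  move=> le_in; rewrite /g; case: pickP => [i' /eqP|/(_ (Ordinal (le_in : (i < n.+1)%N)))].
    exact: factorB (ltn_ord i') le_in.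
  by rewrite eqxx.
exists (fun a b => (g b == a)%:R); split.
- by move=> a b; case: eqP; rewrite ?ler01 lexx.
- move=> b; rewrite (bigD1 (g b)) //= eqxx big1 ?addr0 // => a.
  by rewrite eq_sym => /negbTE ->.
- move=> a; apply/matrixP => i j.
  by rewrite sum_scale_label_obsE !mxE (gB _ (ltn_ord i)) -natrM mulnb.
Qed.

Lemma kraus_pred_mxE n (L : 'M[C]_n) (r : rel nat) (p : pred nat) :
  (forall a b : 'I_n, L a b = (r a b)%:R) -> forall i j : 'I_n,
  (adj L *m pred_mx n p *m L) i j = \sum_(b < n) ((r b i && p b) && r b j)%:R.
Proof.
move=> defL i j; rewrite mxE; apply: eq_bigr => b _.
rewrite mxE (bigD1 b) //= big1 => [|a neq_ab].
  by rewrite addr0 !mxE !defL eqxx rmorph_nat -!natrM !mulnb.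
by rewrite [pred_mx _ _ _ _]mxE (negbTE neq_ab) mulr0.
Qed.

End LabelObservables.

Section ShiftInstrument.
Variables (C : numClosedFieldType) (m : nat).
Local Notation N := m.+1.
Local Notation e k := (std_vec C N k).

Definition shift_kraus (o : 'I_2) : 'M[C]_N :=
  \matrix_(i, j) (if o == 0 then (i == m :> nat) && (j == m :> nat) else i == j.+1 :> nat)%:R.

Lemma std_vec_adjE k l (i j : 'I_N) :
  (e k *m adj (e l)) i j = ((i == k :> nat) && (j == l :> nat))%:R.
Proof. by rewrite !mxE big_ord1 !mxE rmorph_nat -natrM mulnb. Qed.

Lemma shift_kraus0E : e m *m adj (e m) = shift_kraus 0.
Proof. by apply/matrixP => i j; rewrite std_vec_adjE mxE. Qed.

Lemma shift_kraus1E : \sum_(0 <= k < m) e k.+1 *m adj (e k) = shift_kraus 1.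
Proof.
apply/matrixP => i j; rewrite summxE big_mkord mxE /=.
under eq_bigr => k _ do rewrite std_vec_adjE andbC (eq_sym (nat_of_ord j)).
rewrite (sum_nat_eq _ _ _ (fun k => nat_of_ord i == k.+1)); case: ltnP => //= le_mj.
have -> : (j : nat) = m by apply/eqP; rewrite eqn_leq le_mj -ltnS ltn_ord.
by case: eqP => // eq_i; move: (ltn_ord i); rewrite eq_i ltnn.
Qed.

Lemma shift_kraus0_pred_mx (p : pred nat) :
  kraus_instr shift_kraus 0 (pred_mx C N p) = pred_mx C N (fun k => (k == m) && p k).
Proof.
apply/matrixP => i j; rewrite /kraus_instr.
rewrite (@kraus_pred_mxE _ _ _ (fun a b => (a == m) && (b == m))) => [|a b]; last by rewrite mxE.
rewrite mxE.
transitivity (\sum_(b < N) ((b == m :> nat) && ((i == m :> nat) && p b && (j == m :> nat)))%:R : C).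
  by apply: eq_bigr => b _; case: (_ == m).
rewrite (sum_nat_eq _ _ _ (fun b => (i == m :> nat) && p b && (j == m :> nat))) ltnSn /=.
congr (_%:R).
have [eq_im|] := eqVneq (i : nat) m; last by rewrite !andbF.
by rewrite -val_eqE /= eq_im eq_sym andbC.
Qed.

Lemma shift_kraus1_pred_mx (p : pred nat) :
  kraus_instr shift_kraus 1 (pred_mx C N p) = pred_mx C N (fun k => (k < m)%N && p k.+1).
Proof.
apply/matrixP => i j; rewrite /kraus_instr.
rewrite (@kraus_pred_mxE _ _ _ (fun a b => a == b.+1)) => [|a b]; last by rewrite mxE.
rewrite mxE; under eq_bigr => b _ do rewrite -andbA.
rewrite (sum_nat_eq _ _ _ (fun b => p b && (b == j.+1))) ltnS eqSS -val_eqE /=.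
by congr (nat_of_bool _)%:R; apply/idP/idP => /and3P[? ? ?]; apply/and3P.
Qed.

(* The outcome word read off from e_k: the shift fires until e_m is reached,
   after which only L_0 acts. *)
Definition shift_word n k : seq 'I_2 :=
  nseq (minn n (m - k)) 1 ++ nseq (n - minn n (m - k)) 0.

Lemma size_shift_word n k : size (shift_word n k) = n.
Proof. by rewrite size_cat !size_nseq subnKC // geq_minl. Qed.

Lemma shift_wordS n k : (k <= m)%N ->
  shift_word n.+1 k = if (k < m)%N then 1 :: shift_word n k.+1 else 0 :: shift_word n k.
Proof.
move=> le_km; rewrite /shift_word; case: ltnP => [lt_km|le_mk].
  by rewrite -subnSK // minnSS subSS.
have -> : (m - k = 0)%N by apply/eqP; rewrite subn_eq0.
by rewrite !minn0 !subn0.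
Qed.

Lemma shift_word_eq n i j :
  shift_word n i = shift_word n j <-> minn n (m - i) = minn n (m - j).
Proof.
split=> [|eq_min]; last by rewrite /shift_word eq_min.
move/(congr1 (count_mem 1)); rewrite !count_cat !count_nseq /=.
by rewrite !mul1n !mul0n !addn0.
Qed.

Lemma foldr_shift_kraus (s : seq 'I_2) :
  foldr (kraus_instr shift_kraus) 1%:M s = pred_mx C N (fun k => s == shift_word (size s) k).
Proof.
elim: s => [|o s IHs] /=.
  by apply/matrixP => i j; rewrite !mxE /shift_word min0n eqxx andbT.
rewrite IHs; case: (ord2_cases o) => ->; [rewrite shift_kraus0_pred_mx | rewrite shift_kraus1_pred_mx];
  apply: eq_pred_mx => k lt_kN; rewrite shift_wordS //;
  case: ltnP => [lt_km|le_mk]; rewrite eqseq_cons //=.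
- by rewrite ltn_eqF.
- by rewrite (_ : k = m) ?eqxx //; apply/eqP; rewrite eqn_leq le_mk -ltnS lt_kN.
Qed.

Definition shift_tuple n k : n.-tuple 'I_2 := Tuple (introT eqP (size_shift_word n k)).

Lemma shift_tuple_eq n i j :
  shift_tuple n i = shift_tuple n j <-> minn n (m - i) = minn n (m - j).
Proof.
by split=> [/(congr1 val)/shift_word_eq|/shift_word_eq eq_ij] //; apply: val_inj.
Qed.

Lemma seq_obs_shift_kraus n (w : n.-tuple 'I_2) :
  seq_obs (kraus_instr shift_kraus) n w = label_obs C N (shift_tuple n) w.
Proof.
rewrite /seq_obs foldr_shift_kraus size_tuple; apply: eq_pred_mx => k _.
by rewrite -val_eqE eq_sym.
Qed.

Section ConjugatedShift.
Variables (U : 'M[C]_N) (L : 'I_2 -> 'M[C]_N).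
Hypotheses (unitU : adj U *m U = 1%:M) (defL : forall o, L o = U *m shift_kraus o *m adj U).
Local Notation A n := (seq_obs (kraus_instr L) n).

Lemma postproc_shift_seq_obsE n n' :
  postproc (A n) (A n') <->
  (forall i j, (i <= m)%N -> (j <= m)%N ->
     minn n' (m - i) = minn n' (m - j) -> minn n (m - i) = minn n (m - j)).
Proof.
have defA k : A k =1 (fun w => U *m label_obs C N (shift_tuple k) w *m adj U).
  by move=> w; rewrite (seq_obs_unitary_conj unitU defL) seq_obs_shift_kraus.
split=> [|factor].
  move/(eq_postproc (defA n) (defA n'))/(postproc_unitary_conjE _ _ unitU)/postproc_label_obsP.
  by move=> factor i j le_im le_jm /shift_tuple_eq/(factor i j le_im le_jm)/shift_tuple_eq.
apply: (eq_postproc (fsym (defA n)) (fsym (defA n'))).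
apply/(postproc_unitary_conjE _ _ unitU)/postproc_label_obsP.
by move=> i j le_im le_jm /shift_tuple_eq/(factor i j le_im le_jm)/shift_tuple_eq.
Qed.

Lemma shift_seq_obs_mono n : postproc (A n) (A n.+1).
Proof. by apply/postproc_shift_seq_obsE => i j _ _; lia. Qed.

Lemma shift_seq_obs_strict n : (n < m)%N -> ~ postproc (A n.+1) (A n).
Proof.
move=> lt_nm /postproc_shift_seq_obsE /(_ 0 (m - n)%N (leq0n m) (leq_subr n m)).
lia.
Qed.

Lemma shift_seq_obs_stable n : (m <= n)%N -> postproc (A n.+1) (A n).
Proof. by move=> le_mn; apply/postproc_shift_seq_obsE => i j le_im le_jm; lia. Qed.

End ConjugatedShift.

Lemma basis_shift_krausE (U : 'M[C]_N) (o : 'I_2) :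
  (if o == 0 then U *m e m *m adj (U *m e m)
   else \sum_(0 <= k < m) U *m e k.+1 *m adj (U *m e k)) = U *m shift_kraus o *m adj U.
Proof.
have conjE k l : U *m e k *m adj (U *m e l) = U *m (e k *m adj (e l)) *m adj U.
  by rewrite adjM !mulmxA.
case: (ord2_cases o) => ->; first by rewrite eqxx conjE shift_kraus0E.
under eq_bigr => k _ do rewrite conjE.
by rewrite -mulmx_suml -mulmx_sumr shift_kraus1E.
Qed.

End ShiftInstrument.

Theorem mainTheorem6 (C : numClosedFieldType) (d : nat) (hd : (2 <= d)%N)
    (U : 'M[C]_d) (hU : adj U *m U = 1%:M) :
  let phi := fun k : nat => U *m std_vec C d k in
  let L := fun w : 'I_2 =>
    if w == 0 then phi d.-1 *m adj (phi d.-1)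
    else \sum_(0 <= k < d.-1) phi k.+1 *m adj (phi k) in
  let I := kraus_instr L in
  (forall n, (1 <= n)%N -> (n < d.-1)%N ->
     obs_strict (seq_obs I n) (seq_obs I n.+1)) /\
  (forall n, (d.-1 <= n)%N -> obs_equiv (seq_obs I n) (seq_obs I n.+1)) /\
  is_sat I d.-1.
Proof.
case: d hd U hU => [|m] // lt1m U unitU phi L I /=.
have defL o : L o = U *m shift_kraus C m o *m adj U by exact: basis_shift_krausE.
have mono := shift_seq_obs_mono unitU defL.
have strict := shift_seq_obs_strict unitU defL.
have stable := shift_seq_obs_stable unitU defL.
split; [|split].
- by move=> n _ lt_nm; split; [exact: mono | exact: strict].
- by move=> n le_mn; split; [exact: mono | exact: stable].
- split=> //; first by split; [exact: mono | exact: stable].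
  by move=> k _ [_ stable_k]; rewrite leqNgt; apply/negP => /strict; apply.
Qed.
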